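(* For real $u,w$ and an integer $n\ge1$ let $g_n(u,w):=\sum_{i=1}^n i\,w^{i-1}u^{n-i}$. For every natural number $m\ge 1$: (i) $$g_{4m+2}(w,u)-g_{4m+2}(u,w)=\sum_{i=0}^{2m}(4m+1-2i)(uw)^i\left(u^{4m+1-2i}-w^{4m+1-2i}\right)$$ $$=(u+w)\sum_{i=0}^{m-1}(4m-1-4i)\left(u^{4m-4i}-w^{4m-4i}\right)(uw)^{2i}+2\sum_{i=0}^{m-1}\left(u^{4m+1-4i}-w^{4m+1-4i}\right)(uw)^{2i}+(uw)^{2m}(u-w);$$ (ii) $$g_{4m}(w,u)-g_{4m}(u,w)=\sum_{i=0}^{2m-1}(4m-1-2i)(uw)^i\left(u^{4m-1-2i}-w^{4m-1-2i}\right)$$ $$=(u+w)\sum_{i=0}^{m-1}(4m-3-4i)\left(u^{4m-2-4i}-w^{4m-2-4i}\right)(uw)^{2i}+2\sum_{i=0}^{m-1}\left(u^{4m-1-4i}-w^{4m-1-4i}\right)(uw)^{2i}.$$ Furthermore, let $\beta>0$, $k>0$, and $w=\delta(u)$ with $\delta$ the involution defined in the context. Then $g_n(w,u)>g_n(u,w)$ for all even positive integers $n$, both when $-k<u_0<0$ (for $u\in(0,u_1)$) and when $u_0<-k$ (for $u\in(0,k)$).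
   Context: $\Phi(u)=\beta\left(-\frac{u^4}{4}+\frac{k+u_0}{3}u^3-\frac{ku_0}{2}u^2\right)$. Case $-k<u_0<0$: $u_1$ is the unique point of $(0,k)$ with $\Phi(u_1)=\Phi(u_0)$, and for $u\in(0,u_1)$, $\delta(u)$ is the unique $w\in(u_0,0)$ with $\Phi(w)=\Phi(u)$. Case $u_0<-k$: $w_2$ is the unique point of $(u_0,0)$ with $\Phi(w_2)=\Phi(k)$, and for $u\in(0,k)$, $\delta(u)$ is the unique $w\in(w_2,0)$ with $\Phi(w)=\Phi(u)$. *)

From HB Require Import structures.
From mathcomp Require Import all_boot all_order all_algebra.
From mathcomp Require Import reals.
Set Implicit Arguments. Unset Strict Implicit. Unset Printing Implicit Defensive.
Import Order.TTheory GRing.Theory Num.Theory.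
Local Open Scope ring_scope.

Definition g {R : realType} (n : nat) (u w : R) : R :=
  \sum_(1 <= i < n.+1) i%:R * w ^+ (i - 1) * u ^+ (n - i).

Definition Phi {R : realType} (beta k u0 : R) (u : R) : R :=
  beta * (- u ^+ 4 / 4%:R + (k + u0) / 3%:R * u ^+ 3 - k * u0 / 2%:R * u ^+ 2).

From HB Require Import structures.
From mathcomp Require Import all_boot all_order all_algebra.
From mathcomp Require Import reals.
From mathcomp Require Import zify ring.
Set Implicit Arguments. Unset Strict Implicit. Unset Printing Implicit Defensive.
Import Order.TTheory GRing.Theory Num.Theory.
Local Open Scope ring_scope.

(* Write D_n := g_n(w,u) - g_n(u,w).  Peeling the first and last terms off g_(n+2)
   leaves uw (g_n + h_n) with h_n symmetric in u and w, so
   D_(n+2) = (n+1)(u^(n+1) - w^(n+1)) + uw D_n, which is also the recursion of the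
   first sums in (i) and (ii).  Unrolling it two steps at a time writes D_(2p) as
   a combination, with weights (uw)^(2i) >= 0, of the blocks
   (2q+1)(u+w)(u^(2q+2) - w^(2q+2)) + 2(u^(2q+3) - w^(2q+3)), which are the right-hand
   sides of (i) and (ii).  Each block is positive as soon as w < u, since
   (u+w)(u^(2j) - w^(2j)) = (u+w)^2 (u-w) * (sum of even powers) and odd powers are
   increasing.  Hence g_n(w,u) > g_n(u,w) for all even n > 0 and all w < u; of the
   involution w = delta(u) only the signs w < 0 < u are used. *)

Lemma ltr_oddXn2r (R : realDomainType) n (x y : R) : odd n -> x < y -> x ^+ n < y ^+ n.
Proof.
move=> odd_n lt_xy; have n_neq0 : n != 0%N by case: n odd_n.
have [x_ge0|x_lt0] := leP 0 x; first by rewrite ltrXn2r.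
have [y_ge0|y_lt0] := leP 0 y.
  by apply: (@lt_le_trans _ _ 0); rewrite ?exprn_odd_lt0 ?exprn_odd_ge0.
have oddXN z : (- z) ^+ n = - z ^+ n by rewrite exprNn -signr_odd odd_n mulN1r.
by rewrite -ltrN2 -!oddXN ltrXn2r // ?ltrN2 // oppr_ge0 ltW.
Qed.

Section SkewSum.
Variables (R : comPzRingType) (u w : R).

Definition skew_sum p := \sum_(0 <= i < p)
  (2 * p - 1 - 2 * i)%:R * (u * w) ^+ i * (u ^+ (2 * p - 1 - 2 * i) - w ^+ (2 * p - 1 - 2 * i)).

Definition skew_block q := (2 * q).+1%:R * (u + w) * (u ^+ (2 * q).+2 - w ^+ (2 * q).+2)
  + 2%:R * (u ^+ (2 * q).+3 - w ^+ (2 * q).+3).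

Lemma skew_sum0 : skew_sum 0 = 0.
Proof. by rewrite /skew_sum big_geq. Qed.

Lemma skew_sumS p :
  skew_sum p.+1 = (2 * p).+1%:R * (u ^+ (2 * p).+1 - w ^+ (2 * p).+1) + u * w * skew_sum p.
Proof.
rewrite /skew_sum big_nat_recl // muln0 subn0 expr0 mulr1 mulr_sumr.
have -> : (2 * p.+1 - 1 = (2 * p).+1)%N by lia.
congr (_ + _); apply: eq_big_nat => i /andP[_ lt_ip].
have -> : ((2 * p).+1 - 2 * i.+1 = 2 * p - 1 - 2 * i)%N by lia.
by rewrite exprS; ring.
Qed.

Lemma skew_sum1 : skew_sum 1 = u - w.
Proof. by rewrite skew_sumS skew_sum0 mulr0 addr0 mul1r !expr1. Qed.

Lemma skew_sumSS q : skew_sum q.+2 = (u * w) ^+ 2 * skew_sum q + skew_block q.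
Proof.
rewrite !skew_sumS /skew_block (_ : 2 * q.+1 = (2 * q).+2)%N; last by lia.
by rewrite !exprS !mulrS; ring.
Qed.

Lemma skew_sum_add2n p m : skew_sum (p + 2 * m) =
  (u * w) ^+ (2 * m) * skew_sum p + \sum_(0 <= i < m) (u * w) ^+ (2 * i) * skew_block (p + 2 * (m - i.+1)).
Proof.
elim: m => [|m IHm]; first by rewrite muln0 addn0 expr0 mul1r big_geq // addr0.
rewrite (_ : p + 2 * m.+1 = (p + 2 * m).+2)%N; last by lia.
rewrite skew_sumSS IHm big_nat_recl // subSS subn0 muln0 expr0 mul1r.
have -> : \sum_(0 <= i < m) (u * w) ^+ (2 * i.+1) * skew_block (p + 2 * (m.+1 - i.+2))
  = (u * w) ^+ 2 * \sum_(0 <= i < m) (u * w) ^+ (2 * i) * skew_block (p + 2 * (m - i.+1)).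
  by rewrite mulr_sumr; apply: eq_bigr => i _; rewrite mulnS exprD mulrA.
by rewrite mulnS exprD; ring.
Qed.

Lemma skew_sum_even_split m : skew_sum (2 * m) =
  (u + w) * \sum_(0 <= i < m)
      (4 * m - 3 - 4 * i)%:R * (u ^+ (4 * m - 2 - 4 * i) - w ^+ (4 * m - 2 - 4 * i)) * (u * w) ^+ (2 * i)
  + 2%:R * \sum_(0 <= i < m)
      (u ^+ (4 * m - 1 - 4 * i) - w ^+ (4 * m - 1 - 4 * i)) * (u * w) ^+ (2 * i).
Proof.
have := skew_sum_add2n 0 m; rewrite add0n skew_sum0 mulr0 add0r => ->.
rewrite !mulr_sumr -big_split; apply: eq_big_nat => i /andP[_ lt_im] /=.
rewrite /skew_block add0n.
have -> : ((2 * (2 * (m - i.+1))).+1 = 4 * m - 3 - 4 * i)%N by lia.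
have -> : ((4 * m - 3 - 4 * i).+1 = 4 * m - 2 - 4 * i)%N by lia.
have -> : ((4 * m - 2 - 4 * i).+1 = 4 * m - 1 - 4 * i)%N by lia.
by ring.
Qed.

Lemma skew_sum_odd_split m : skew_sum (2 * m).+1 =
  (u + w) * \sum_(0 <= i < m)
      (4 * m - 1 - 4 * i)%:R * (u ^+ (4 * m - 4 * i) - w ^+ (4 * m - 4 * i)) * (u * w) ^+ (2 * i)
  + 2%:R * \sum_(0 <= i < m)
      (u ^+ (4 * m + 1 - 4 * i) - w ^+ (4 * m + 1 - 4 * i)) * (u * w) ^+ (2 * i)
  + (u * w) ^+ (2 * m) * (u - w).
Proof.
have := skew_sum_add2n 1 m; rewrite add1n skew_sum1 => ->.
rewrite addrC !mulr_sumr -big_split; congr (_ + _); apply: eq_big_nat => i /andP[_ lt_im] /=.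
rewrite /skew_block.
have -> : ((2 * (1 + 2 * (m - i.+1))).+1 = 4 * m - 1 - 4 * i)%N by lia.
have -> : ((4 * m - 1 - 4 * i).+1 = 4 * m - 4 * i)%N by lia.
have -> : ((4 * m - 4 * i).+1 = 4 * m + 1 - 4 * i)%N by lia.
by ring.
Qed.

End SkewSum.

Section SkewSumPositive.
Variables (R : realDomainType) (u w : R).
Hypothesis lt_wu : w < u.

Lemma mulrD_subrX_even_ge0 k : 0 <= (u + w) * (u ^+ (2 * k) - w ^+ (2 * k)).
Proof.
rewrite !exprM subrXX mulrA mulr_ge0 //.
  have -> : (u + w) * (u ^+ 2 - w ^+ 2) = (u + w) ^+ 2 * (u - w) by ring.
  by rewrite mulr_ge0 ?sqr_ge0 // subr_ge0 ltW.
by rewrite sumr_ge0 // => i _; rewrite mulr_ge0 // exprn_ge0 // sqr_ge0.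
Qed.

Lemma skew_block_gt0 q : 0 < skew_block u w q.
Proof.
have := mulrD_subrX_even_ge0 q.+1; rewrite mulnS add2n => even_ge0.
rewrite /skew_block -mulrA; apply: ltr_wpDl; first by rewrite mulr_ge0.
by rewrite mulr_gt0 // subr_gt0 ltr_oddXn2r //= oddM.
Qed.

Lemma skew_sum_gt0 p : 0 < skew_sum u w p.+1.
Proof.
elim/ltn_ind: p => -[_|[_|q IHq]].
- by rewrite skew_sum1 subr_gt0.
- by rewrite skew_sumSS skew_sum0 mulr0 add0r skew_block_gt0.
by rewrite skew_sumSS ltr_wpDl ?skew_block_gt0 // mulr_ge0 ?sqr_ge0 // ltW ?IHq.
Qed.

End SkewSumPositive.

Lemma sum_exprM_sym (R : comPzSemiRingType) n (a b : R) :
  \sum_(1 <= i < n.+1) b ^+ (i - 1) * a ^+ (n - i) = \sum_(1 <= i < n.+1) a ^+ (i - 1) * b ^+ (n - i).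
Proof.
rewrite big_nat_rev; apply: eq_big_nat => i /andP[i_ge1 i_le_n].
rewrite add1n subSS mulrC; congr (_ ^+ _ * _ ^+ _); lia.
Qed.

Section GDiff.
Variable R : realType.

Lemma gSS n (a b : R) : g n.+2 a b = a ^+ n.+1 + n.+2%:R * b ^+ n.+1
  + a * b * (g n a b + \sum_(1 <= i < n.+1) b ^+ (i - 1) * a ^+ (n - i)).
Proof.
rewrite /g big_nat_recl // big_nat_recr //= addrA addrAC -big_split mulr_sumr /=.
congr (_ + _ + _).
- by rewrite mul1r expr0 mul1r subSS subn0.
- by rewrite subSS subn0 subnn mulr1.
apply: eq_big_nat => i /andP[i_ge1 i_le_n].
have -> : (i.+1 - 1 = (i - 1).+1)%N by lia.
have -> : (n.+2 - i.+1 = (n - i).+1)%N by lia.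
by rewrite !exprS mulrS; ring.
Qed.

Lemma gdiffSS n (u w : R) : g n.+2 w u - g n.+2 u w
  = n.+1%:R * (u ^+ n.+1 - w ^+ n.+1) + u * w * (g n w u - g n u w).
Proof. by rewrite !gSS sum_exprM_sym mulrS; ring. Qed.

Lemma gdiff_double p (u w : R) : g (2 * p) w u - g (2 * p) u w = skew_sum u w p.
Proof.
elim: p => [|p IHp]; first by rewrite skew_sum0 /g !big_geq // subrr.
by rewrite mulnS add2n gdiffSS IHp skew_sumS.
Qed.

Lemma g_lt_even n (u w : R) : w < u -> (0 < n)%N -> ~~ odd n -> g n u w < g n w u.
Proof.
move=> lt_wu n_gt0 even_n; rewrite -subr_gt0.
have -> : n = (2 * n./2.-1.+1)%N by move: n_gt0 even_n (odd_double_half n); lia.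
by rewrite gdiff_double skew_sum_gt0.
Qed.

End GDiff.

Theorem lemma3p7 (R : realType) :
  (* (i) *)
  (forall (m : nat) (u w : R), (1 <= m)%N ->
     g (4 * m + 2) w u - g (4 * m + 2) u w
     = \sum_(0 <= i < (2 * m).+1)
         (4 * m + 1 - 2 * i)%:R * (u * w) ^+ i
           * (u ^+ (4 * m + 1 - 2 * i) - w ^+ (4 * m + 1 - 2 * i))
   /\ \sum_(0 <= i < (2 * m).+1)
         (4 * m + 1 - 2 * i)%:R * (u * w) ^+ i
           * (u ^+ (4 * m + 1 - 2 * i) - w ^+ (4 * m + 1 - 2 * i))
     = (u + w) * \sum_(0 <= i < m)
           (4 * m - 1 - 4 * i)%:R * (u ^+ (4 * m - 4 * i) - w ^+ (4 * m - 4 * i))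
             * (u * w) ^+ (2 * i)
       + 2%:R * \sum_(0 <= i < m)
           (u ^+ (4 * m + 1 - 4 * i) - w ^+ (4 * m + 1 - 4 * i)) * (u * w) ^+ (2 * i)
       + (u * w) ^+ (2 * m) * (u - w)) /\
  (* (ii) *)
  (forall (m : nat) (u w : R), (1 <= m)%N ->
     g (4 * m) w u - g (4 * m) u w
     = \sum_(0 <= i < 2 * m)
         (4 * m - 1 - 2 * i)%:R * (u * w) ^+ i
           * (u ^+ (4 * m - 1 - 2 * i) - w ^+ (4 * m - 1 - 2 * i))
   /\ \sum_(0 <= i < 2 * m)
         (4 * m - 1 - 2 * i)%:R * (u * w) ^+ i
           * (u ^+ (4 * m - 1 - 2 * i) - w ^+ (4 * m - 1 - 2 * i))
     = (u + w) * \sum_(0 <= i < m)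
           (4 * m - 3 - 4 * i)%:R * (u ^+ (4 * m - 2 - 4 * i) - w ^+ (4 * m - 2 - 4 * i))
             * (u * w) ^+ (2 * i)
       + 2%:R * \sum_(0 <= i < m)
           (u ^+ (4 * m - 1 - 4 * i) - w ^+ (4 * m - 1 - 4 * i)) * (u * w) ^+ (2 * i)) /\
  (* inequality g_n(w,u) > g_n(u,w), n even positive, w = delta(u) *)
  (forall beta k : R, 0 < beta -> 0 < k ->
     (* case -k < u0 < 0 *)
     (forall u0 u1 : R, - k < u0 < 0 ->
        0 < u1 < k -> Phi beta k u0 u1 = Phi beta k u0 u0 ->
        forall u w : R, 0 < u < u1 ->
          u0 < w < 0 -> Phi beta k u0 w = Phi beta k u0 u ->
          forall n : nat, (0 < n)%N -> ~~ odd n ->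
            g n u w < g n w u) /\
     (* case u0 < -k *)
     (forall u0 w2 : R, u0 < - k ->
        u0 < w2 < 0 -> Phi beta k u0 w2 = Phi beta k u0 k ->
        forall u w : R, 0 < u < k ->
          w2 < w < 0 -> Phi beta k u0 w = Phi beta k u0 u ->
          forall n : nat, (0 < n)%N -> ~~ odd n ->
            g n u w < g n w u)).
Proof.
split; [|split].
- move=> m u w _.
  have skewE : skew_sum u w (2 * m).+1 = \sum_(0 <= i < (2 * m).+1)
      (4 * m + 1 - 2 * i)%:R * (u * w) ^+ i * (u ^+ (4 * m + 1 - 2 * i) - w ^+ (4 * m + 1 - 2 * i)).
    by rewrite /skew_sum (_ : 2 * (2 * m).+1 - 1 = 4 * m + 1)%N //; lia.
  by rewrite -skewE -skew_sum_odd_split -gdiff_double (_ : 4 * m + 2 = 2 * (2 * m).+1)%N //; lia.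
- move=> m u w _.
  have skewE : skew_sum u w (2 * m) = \sum_(0 <= i < 2 * m)
      (4 * m - 1 - 2 * i)%:R * (u * w) ^+ i * (u ^+ (4 * m - 1 - 2 * i) - w ^+ (4 * m - 1 - 2 * i)).
    by rewrite /skew_sum (_ : 2 * (2 * m) = 4 * m)%N //; lia.
  by rewrite -skewE -skew_sum_even_split -gdiff_double (_ : 2 * (2 * m) = 4 * m)%N //; lia.
- move=> beta k _ _; split=> [u0 u1|u0 w2] _ _ _ u w /andP[u_gt0 _] /andP[_ w_lt0] _ n.
  all: by apply: g_lt_even; apply: lt_trans w_lt0 u_gt0.
Qed.
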